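(* There exist an absolute constant $c>0$ and an integer $N$ such that for every integer $n\geq N$ the following holds. Let $f:\mathbb{R}\to\mathbb{R}$ be the continuous function which equals $1$ on $[\frac{1}{n},1-\frac{1}{n}]$, equals $-1$ on $[-1+\frac{1}{n},-\frac{1}{n}]$, equals $0$ for $|t|\geq 1$, and is linear on each of the intervals $[-1,-1+\frac{1}{n}]$, $[-\frac{1}{n},\frac{1}{n}]$ and $[1-\frac{1}{n},1]$. Let $\phi_n(x)=c_n\left(1-\frac{x^2}{4}\right)^{n^2}$, with $c_n>0$ chosen so that $\int_{-2}^2\phi_n(x)\,dx=1$, and let $P_n(t)=\int_{-1}^1 f(x)\phi_n(t-x)\,dx$. Then $P_n$ is a polynomial of degree $d=2n^2-1$ and $$\bigg|\,\mathrm{p.v.}\int_{\mathbb{R}} e^{iP_n(t)}\frac{dt}{t}\bigg|\geq c\log d.$$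
   Context: The principal value integral is $\mathrm{p.v.}\int_{\mathbb{R}} e^{iP(t)}\frac{dt}{t}=\lim_{\epsilon\to 0^+,\,R\to\infty}\int_{\epsilon\leq |t|\leq R} e^{iP(t)}\frac{dt}{t}$. *)

From Stdlib Require Import Reals.
From Coquelicot Require Import Coquelicot.
Open Scope R_scope.

(* f is affine (linear in the paper's sense) on [a,b]. *)
Definition affine_on (f : R -> R) (a b : R) : Prop :=
  exists alpha beta : R, forall t, a <= t <= b -> f t = alpha * t + beta.

Definition trunc_int (g : R -> R) (eps Rr : R) : R :=
  RInt g (- Rr) (- eps) + RInt g eps Rr.

Definition pv_integral (g : R -> R) (L : R) : Prop :=
  filterlim (fun p : R * R => trunc_int g (fst p) (snd p))
    (filter_prod (at_right 0) (Rbar_locally p_infty)) (locally L).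

Definition is_poly_of_degree (P : R -> R) (d : nat) : Prop :=
  exists a : nat -> R, a d <> 0 /\
    forall t, P t = sum_f_R0 (fun k => a k * t ^ k) d.

From Stdlib Require Import Reals Lra Lia Psatz.
From Coquelicot Require Import Coquelicot.
Open Scope R_scope.

(* The kernel [phi_n] is even and [f] is odd, so [P_n] is odd: [cos P_n(t) / t] is odd
   and has principal value 0, while [sin P_n(t) / t] is even and its principal value is
   [2 (int_0^1 + int_1^oo)].  Since [phi_n] has mass [1 - O(e^-4)] within [4/n] of 0,
   [0 <= P_n <= 1] on [[0, 1]] and [P_n >= 7/8 > pi/6] on [[5/n, 1/2]], so
   [int_0^1 sin P_n(t) / t >= (1/2) log (n/10)].  For [t >= 3] only the part of [phi_n]
   beyond [2] is seen, where [(1 - y^2/4)^(n^2)] has a fixed sign and grows: up to that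
   sign, [P_n' >= c_n / 8] at [3] and [P_n'' >= 0], and van der Corput's integration by
   parts bounds [int_3^oo] by a constant.  As [log d <= 1 + 2 log n], [c = 1/8] works. *)

(* After unfolding Coquelicot's [plus], [scal], ... an equation may still be typed at a
   structure type on which [ring] and [field] find no ring; this retypes it at [R]. *)
Ltac req_R := match goal with |- ?a = ?b => change (@eq R a b) end.

Definition everywhere_continuous (g : R -> R) : Prop := forall x, continuity_pt g x.

Lemma ex_RInt_continuity_pt (g : R -> R) p q : p <= q ->
  (forall x, p <= x <= q -> continuity_pt g x) -> ex_RInt g p q.
Proof.
  intros Hpq Hg. apply (@ex_RInt_continuous R_CompleteNormedModule). intros z Hz.
  rewrite Rmin_left, Rmax_right in Hz by lra. apply continuity_pt_filterlim, Hg, Hz.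
Qed.

Lemma ex_RInt_everywhere_continuous (g : R -> R) p q :
  everywhere_continuous g -> ex_RInt g p q.
Proof.
  intros Hg. apply (@ex_RInt_continuous R_CompleteNormedModule).
  intros z _. apply continuity_pt_filterlim, Hg.
Qed.

Lemma everywhere_continuous_mult (g h : R -> R) :
  everywhere_continuous g -> everywhere_continuous h ->
  everywhere_continuous (fun x => g x * h x).
Proof. intros Hg Hh x. apply continuity_pt_mult; auto. Qed.

Lemma everywhere_continuous_minus (g h : R -> R) :
  everywhere_continuous g -> everywhere_continuous h ->
  everywhere_continuous (fun x => g x - h x).
Proof. intros Hg Hh x. apply continuity_pt_minus; auto. Qed.

Lemma everywhere_continuous_comp_affine (g : R -> R) u v :
  everywhere_continuous g -> everywhere_continuous (fun x => g (u * x + v)).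
Proof. intros Hg x. apply (continuity_pt_comp (fun x => u * x + v) g); auto. reg. Qed.

Lemma everywhere_continuous_comp_sub (g : R -> R) t :
  everywhere_continuous g -> everywhere_continuous (fun x => g (t - x)).
Proof. intros Hg x. apply (continuity_pt_comp (fun x => t - x) g); [reg | apply Hg]. Qed.

Lemma everywhere_continuous_comp_add (g : R -> R) t :
  everywhere_continuous g -> everywhere_continuous (fun x => g (t + x)).
Proof. intros Hg x. apply (continuity_pt_comp (fun x => t + x) g); [reg | apply Hg]. Qed.

Lemma RInt_const_R (c p q : R) : RInt (fun _ => c) p q = c * (q - p).
Proof. rewrite RInt_const. unfold scal; simpl; unfold mult; simpl. ring. Qed.

Lemma RInt_scal_R (g : R -> R) l p q :
  ex_RInt g p q -> RInt (fun x => l * g x) p q = l * RInt g p q.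
Proof. exact (fun H => RInt_scal g p q l H). Qed.

Lemma RInt_plus_R (g h : R -> R) p q : everywhere_continuous g -> everywhere_continuous h ->
  RInt (fun x => g x + h x) p q = RInt g p q + RInt h p q.
Proof. intros Hg Hh. apply (RInt_plus g h); apply ex_RInt_everywhere_continuous; auto. Qed.

Lemma RInt_minus_R (g h : R -> R) p q : everywhere_continuous g -> everywhere_continuous h ->
  RInt (fun x => g x - h x) p q = RInt g p q - RInt h p q.
Proof. intros Hg Hh. apply (RInt_minus g h); apply ex_RInt_everywhere_continuous; auto. Qed.

Lemma RInt_opp_R (g : R -> R) p q : ex_RInt g p q -> RInt (fun x => - g x) p q = - RInt g p q.
Proof. exact (fun H => RInt_opp g p q H). Qed.

Lemma RInt_Chasles_continuity_pt (g : R -> R) p r q : p <= r -> r <= q ->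
  (forall x, p <= x <= q -> continuity_pt g x) -> RInt g p q = RInt g p r + RInt g r q.
Proof.
  intros H1 H2 Hg. rewrite <- (RInt_Chasles g p r q); [reflexivity | |];
  apply ex_RInt_continuity_pt; auto; intros; apply Hg; lra.
Qed.

Lemma RInt_ge_0_continuity_pt (g : R -> R) p q : p <= q ->
  (forall x, p <= x <= q -> continuity_pt g x) ->
  (forall x, p <= x <= q -> 0 <= g x) -> 0 <= RInt g p q.
Proof.
  intros Hpq Hg H. apply RInt_ge_0; auto.
  - apply ex_RInt_continuity_pt; auto.
  - intros; apply H; lra.
Qed.

Lemma RInt_le_continuity_pt (g h : R -> R) p q : p <= q ->
  (forall x, p <= x <= q -> continuity_pt g x) -> (forall x, p <= x <= q -> continuity_pt h x) ->
  (forall x, p <= x <= q -> g x <= h x) -> RInt g p q <= RInt h p q.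
Proof.
  intros Hpq Hg Hh H. apply RInt_le; auto; try (apply ex_RInt_continuity_pt; auto).
  intros; apply H; lra.
Qed.

Lemma RInt_subinterval_le (g : R -> R) p r s q : p <= r -> r <= s -> s <= q ->
  (forall x, p <= x <= q -> continuity_pt g x) ->
  (forall x, p <= x <= q -> 0 <= g x) -> RInt g r s <= RInt g p q.
Proof.
  intros H1 H2 H3 Hg H.
  rewrite (RInt_Chasles_continuity_pt g p r q), (RInt_Chasles_continuity_pt g r s q)
    by (auto; try lra; intros; apply Hg; lra).
  assert (0 <= RInt g p r) by (apply RInt_ge_0_continuity_pt; auto; intros; [apply Hg | apply H]; lra).
  assert (0 <= RInt g s q) by (apply RInt_ge_0_continuity_pt; auto; intros; [apply Hg | apply H]; lra).
  lra.
Qed.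

Lemma RInt_ge_const (g : R -> R) c p q : p <= q ->
  (forall x, p <= x <= q -> continuity_pt g x) ->
  (forall x, p <= x <= q -> c <= g x) -> c * (q - p) <= RInt g p q.
Proof.
  intros Hpq Hg H. rewrite <- RInt_const_R.
  apply RInt_le_continuity_pt; auto. intros; apply continuity_pt_const; intros ? ?; reflexivity.
Qed.

Lemma RInt_le_const (g : R -> R) c p q : p <= q ->
  (forall x, p <= x <= q -> continuity_pt g x) ->
  (forall x, p <= x <= q -> g x <= c) -> RInt g p q <= c * (q - p).
Proof.
  intros Hpq Hg H. rewrite <- RInt_const_R.
  apply RInt_le_continuity_pt; auto. intros; apply continuity_pt_const; intros ? ?; reflexivity.
Qed.

Lemma RInt_derive_continuity_pt (F Fd : R -> R) p q : p <= q ->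
  (forall t, p <= t <= q -> is_derive F t (Fd t)) ->
  (forall t, p <= t <= q -> continuity_pt Fd t) -> RInt Fd p q = F q - F p.
Proof.
  intros Hpq HF HFd. apply is_RInt_unique.
  apply (is_RInt_derive (V := R_CompleteNormedModule));
    intros x Hx; rewrite Rmin_left, Rmax_right in Hx by lra.
  - auto.
  - apply continuity_pt_filterlim; auto.
Qed.

Lemma RInt_comp_shift_neg (g : R -> R) t p q : everywhere_continuous g ->
  RInt (fun x => g (t - x)) p q = RInt g (t - q) (t - p).
Proof.
  intros Hg.
  assert (E := RInt_comp_lin g (-1) t p q (ex_RInt_everywhere_continuous _ _ _ Hg)).
  replace (-1 * p + t) with (t - p) in E by ring. replace (-1 * q + t) with (t - q) in E by ring.
  rewrite RInt_scal in E
    by (apply ex_RInt_everywhere_continuous, everywhere_continuous_comp_affine; auto).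
  unfold scal in E; simpl in E; unfold mult in E; simpl in E.
  rewrite <- (opp_RInt_swap g) by (apply ex_RInt_everywhere_continuous; auto).
  rewrite <- E. unfold opp; simpl.
  rewrite (RInt_ext (fun x => g (t - x)) (fun y => g (-1 * y + t)))
    by (intros x _; f_equal; ring).
  rewrite Ropp_mult_distr_l. replace (- -1) with 1 by ring. rewrite Rmult_1_l. reflexivity.
Qed.

Lemma RInt_comp_shift_pos (g : R -> R) t p q : everywhere_continuous g ->
  RInt (fun x => g (t + x)) p q = RInt g (t + p) (t + q).
Proof.
  intros Hg.
  replace (t + p) with (1 * p + t) by ring. replace (t + q) with (1 * q + t) by ring.
  rewrite <- RInt_comp_lin by (apply ex_RInt_everywhere_continuous; auto).
  apply RInt_ext; intros; unfold scal; simpl; unfold mult; simpl. rewrite Rmult_1_l. f_equal; ring.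
Qed.

Lemma RInt_comp_opp (g : R -> R) p q : ex_RInt g (-q) (-p) ->
  RInt g (-q) (-p) = RInt (fun x => g (-x)) p q.
Proof.
  intros Hex.
  assert (Hex' : ex_RInt g (-1 * p + 0) (-1 * q + 0)).
  { replace (-1 * p + 0) with (-p) by ring. replace (-1 * q + 0) with (-q) by ring.
    apply ex_RInt_swap, Hex. }
  assert (Hopp : ex_RInt (fun y => g (-y)) p q).
  { assert (H := ex_RInt_scal _ p q (-1) (ex_RInt_comp_lin g (-1) 0 p q Hex')).
    apply (ex_RInt_ext (V := R_CompleteNormedModule) _ (fun y => g (-y))) in H; [exact H |].
    intros x _; unfold scal; simpl; unfold mult; simpl.
    replace (-1 * x + 0) with (-x) by ring. ring. }
  assert (E := RInt_comp_lin g (-1) 0 p q Hex').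
  replace (-1 * p + 0) with (-p) in E by ring. replace (-1 * q + 0) with (-q) in E by ring.
  rewrite (RInt_ext _ (fun y => - g (-y))) in E.
  2:{ intros x _; unfold scal; simpl; unfold mult; simpl.
      replace (-1 * x + 0) with (-x) by ring. ring. }
  rewrite RInt_opp_R in E by exact Hopp.
  rewrite <- (opp_RInt_swap g) by (apply ex_RInt_swap, Hex). rewrite <- E. unfold opp; simpl. ring.
Qed.

Lemma RInt_symmetric_fold (h : R -> R) : everywhere_continuous h ->
  RInt h (-1) 1 = RInt (fun x => h x + h (-x)) 0 1.
Proof.
  intros Hc.
  assert (Hc' : everywhere_continuous (fun y => h (-y))).
  { intro x. apply (continuity_pt_comp (fun y => -y) h); [reg | apply Hc]. }
  rewrite (RInt_Chasles_continuity_pt h (-1) 0 1) by (try lra; intros; apply Hc).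
  rewrite (RInt_plus_R h (fun y => h (-y))) by auto.
  rewrite Rplus_comm. f_equal.
  assert (E := RInt_comp_opp h 0 1 (ex_RInt_everywhere_continuous _ _ _ Hc)).
  rewrite Ropp_0 in E. rewrite <- E. reflexivity.
Qed.

(** * The trapezoid [f] *)

Section Trapezoid.
Variables (f : R -> R) (a : R).
Hypothesis a_pos : 0 < a.
Hypothesis a_lt_half : 2 * a < 1.
Hypothesis f_one : forall t, a <= t <= 1 - a -> f t = 1.
Hypothesis f_minus_one : forall t, -1 + a <= t <= - a -> f t = -1.
Hypothesis f_zero : forall t, 1 <= Rabs t -> f t = 0.
Hypothesis f_affine_left : affine_on f (-1) (-1 + a).
Hypothesis f_affine_mid : affine_on f (- a) a.
Hypothesis f_affine_right : affine_on f (1 - a) 1.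

Lemma trapezoid_ramps : exists s, s * a = 1 /\
  (forall t, -1 <= t <= -1 + a -> f t = - s * (t + 1)) /\
  (forall t, - a <= t <= a -> f t = s * t) /\
  (forall t, 1 - a <= t <= 1 -> f t = - s * (t - 1)).
Proof.
  destruct f_affine_left as [al [be A1]], f_affine_mid as [ga [de A2]],
    f_affine_right as [al' [be' A3]].
  assert (e1 : al * (-1) + be = 0) by (rewrite <- A1 by lra; apply f_zero; rewrite Rabs_left1; lra).
  assert (e2 : al * (-1 + a) + be = -1) by (rewrite <- A1 by lra; apply f_minus_one; lra).
  assert (e3 : ga * (- a) + de = -1) by (rewrite <- A2 by lra; apply f_minus_one; lra).
  assert (e4 : ga * a + de = 1) by (rewrite <- A2 by lra; apply f_one; lra).
  assert (e5 : al' * (1 - a) + be' = 1) by (rewrite <- A3 by lra; apply f_one; lra).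
  assert (e6 : al' * 1 + be' = 0) by (rewrite <- A3 by lra; apply f_zero; rewrite Rabs_right; lra).
  assert (Hga : ga * a = 1) by nra.
  assert (Hal : al = - ga) by (apply (Rmult_eq_reg_r a); lra).
  assert (Hal' : al' = - ga) by (apply (Rmult_eq_reg_r a); lra).
  exists ga. repeat split; auto; intros t Ht.
  - rewrite A1 by lra. nra.
  - rewrite A2 by lra. nra.
  - rewrite A3 by lra. nra.
Qed.

Lemma trapezoid_odd t : f (-t) = - f t.
Proof.
  destruct trapezoid_ramps as [s [Hs [A1 [A2 A3]]]].
  destruct (Rle_lt_dec 1 (Rabs t)) as [c|c].
  { rewrite (f_zero t), (f_zero (-t)) by (rewrite ?Rabs_Ropp; lra). ring. }
  apply Rabs_def2 in c as [c0 c1].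
  destruct (Rle_lt_dec t (-1 + a)) as [c2|c2].
  { rewrite (A1 t), (A3 (-t)) by lra. ring. }
  destruct (Rle_lt_dec t (- a)) as [c3|c3].
  { rewrite (f_minus_one t), (f_one (-t)) by lra. ring. }
  destruct (Rle_lt_dec t a) as [c4|c4].
  { rewrite (A2 t), (A2 (-t)) by lra. ring. }
  destruct (Rle_lt_dec t (1 - a)) as [c5|c5].
  { rewrite (f_minus_one (-t)), (f_one t) by lra. ring. }
  rewrite (A1 (-t)), (A3 t) by lra. ring.
Qed.

Lemma trapezoid_unit_range t : 0 <= t -> 0 <= f t <= 1.
Proof.
  intros Ht. destruct trapezoid_ramps as [s [Hs [_ [A2 A3]]]].
  assert (0 < s) by nra.
  destruct (Rle_lt_dec t a) as [c4|c4].
  { rewrite A2 by lra. split; nra. }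
  destruct (Rle_lt_dec t (1 - a)) as [c5|c5].
  { rewrite f_one by lra. lra. }
  destruct (Rle_lt_dec t 1) as [c6|c6].
  { rewrite A3 by lra. split; nra. }
  rewrite f_zero by (rewrite Rabs_right; lra). lra.
Qed.

End Trapezoid.

(** * [P_n] is a polynomial *)

Definition bump (m : nat) (y : R) : R := (1 - y ^ 2 / 4) ^ m.
Definition phi (cn : R) (m : nat) (y : R) : R := cn * bump m y.

Definition conv (f : R -> R) (cn : R) (m : nat) (t : R) : R :=
  RInt (fun x => f x * phi cn m (t - x)) (-1) 1.

Lemma ex_RInt_sum_f_R0 (g : nat -> R -> R) a b N :
  (forall k, ex_RInt (g k) a b) -> ex_RInt (fun x => sum_f_R0 (fun k => g k x) N) a b.
Proof.
  intros H; induction N; simpl.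
  - apply H.
  - apply (ex_RInt_plus (fun x => sum_f_R0 (fun k => g k x) N) (g (S N))); auto.
Qed.

Lemma RInt_sum_f_R0 (g : nat -> R -> R) a b N : (forall k, ex_RInt (g k) a b) ->
  RInt (fun x => sum_f_R0 (fun k => g k x) N) a b = sum_f_R0 (fun k => RInt (g k) a b) N.
Proof.
  intros H; induction N; simpl.
  - reflexivity.
  - rewrite <- IHN.
    apply (RInt_plus (fun x => sum_f_R0 (fun k => g k x) N) (g (S N))); auto.
    apply ex_RInt_sum_f_R0; auto.
Qed.

Lemma sum_f_R0_swap (g : nat -> nat -> R) M N :
  sum_f_R0 (fun j => sum_f_R0 (fun i => g j i) N) M =
  sum_f_R0 (fun i => sum_f_R0 (fun j => g j i) M) N.
Proof.
  induction M; simpl.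
  - reflexivity.
  - rewrite IHM, <- plus_sum. reflexivity.
Qed.

Lemma sum_f_R0_zero_tail (h : nat -> R) K N : (K <= N)%nat ->
  (forall i, (K < i)%nat -> h i = 0) -> sum_f_R0 h N = sum_f_R0 h K.
Proof.
  intros HKN Hz; induction N.
  - replace K with 0%nat by lia. reflexivity.
  - destruct (Nat.eq_dec K (S N)); [subst; reflexivity|].
    simpl. rewrite IHN, Hz by lia. ring.
Qed.

Lemma binomial_C_neq_0 n k : Binomial.C n k <> 0.
Proof.
  unfold Binomial.C, Rdiv. apply Rmult_integral_contrapositive_currified.
  - apply INR_fact_neq_0.
  - apply Rinv_neq_0_compat, Rmult_integral_contrapositive_currified; apply INR_fact_neq_0.
Qed.

Lemma bump_binomial (m : nat) (y : R) :
  bump m y = sum_f_R0 (fun j => Binomial.C m j * (-1/4) ^ j * y ^ (2 * j)) m.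
Proof.
  unfold bump. replace (1 - y ^ 2 / 4) with ((-1/4) * y ^ 2 + 1) by field.
  rewrite binomial. apply sum_eq. intros i Hi.
  rewrite pow1, Rpow_mult_distr, pow_mult. ring.
Qed.

Lemma pow_sub_binomial (t x : R) (N : nat) :
  (t - x) ^ N = sum_f_R0 (fun k => Binomial.C N k * (-x) ^ (N - k) * t ^ k) N.
Proof.
  replace (t - x) with (t + - x) by ring. rewrite binomial. apply sum_eq. intros; ring.
Qed.

Definition moment (f : R -> R) (r : nat) : R := RInt (fun x => f x * (-x) ^ r) (-1) 1.

(* The contribution to the coefficient of [t ^ k] of [conv f cn m t] coming from
   the term [j] of [bump_binomial]; it vanishes unless [k <= 2 j]. *)
Definition conv_coef_term (f : R -> R) (cn : R) (m j k : nat) : R :=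
  if (k <=? 2 * j)%nat
  then cn * (Binomial.C m j * (-1/4) ^ j) * Binomial.C (2 * j) k * moment f (2 * j - k)
  else 0.

Definition conv_coef (f : R -> R) (cn : R) (m k : nat) : R :=
  sum_f_R0 (fun j => conv_coef_term f cn m j k) m.

Lemma RInt_binomial_term (f : R -> R) (t : R) (j : nat) : everywhere_continuous f ->
  RInt (fun x => f x * (t - x) ^ (2 * j)) (-1) 1 =
  sum_f_R0 (fun k => Binomial.C (2 * j) k * moment f (2 * j - k) * t ^ k) (2 * j).
Proof.
  intros Hf.
  rewrite (RInt_ext _ (fun x => sum_f_R0 (fun k =>
    (Binomial.C (2 * j) k * t ^ k) * (f x * (-x) ^ (2 * j - k))) (2 * j))).
  2:{ intros x _. rewrite pow_sub_binomial, scal_sum. apply sum_eq; intros; ring. }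
  rewrite RInt_sum_f_R0.
  2:{ intros k. apply ex_RInt_everywhere_continuous. intro; apply continuity_pt_mult; [reg|].
      apply continuity_pt_mult; [apply Hf | reg]. }
  apply sum_eq. intros k _.
  rewrite RInt_scal_R.
  - unfold moment. ring.
  - apply ex_RInt_everywhere_continuous. intro; apply continuity_pt_mult; [apply Hf | reg].
Qed.

Lemma conv_poly_expansion (f : R -> R) (cn : R) (m : nat) (t : R) : everywhere_continuous f ->
  conv f cn m t = sum_f_R0 (fun k => conv_coef f cn m k * t ^ k) (2 * m).
Proof.
  intros Hf. unfold conv.
  rewrite (RInt_ext _ (fun x => sum_f_R0 (fun j =>
    (cn * (Binomial.C m j * (-1/4) ^ j)) * (f x * (t - x) ^ (2 * j))) m)).
  2:{ intros x _. unfold phi. rewrite bump_binomial, !scal_sum. apply sum_eq; intros; ring. }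
  rewrite RInt_sum_f_R0.
  2:{ intros k. apply ex_RInt_everywhere_continuous. intro; apply continuity_pt_mult; [reg|].
      apply continuity_pt_mult; [apply Hf | reg]. }
  rewrite (sum_eq _ (fun j => sum_f_R0 (fun k => conv_coef_term f cn m j k * t ^ k) (2 * m))).
  2:{ intros j Hj.
      rewrite RInt_scal_R.
      2:{ apply ex_RInt_everywhere_continuous. intro; apply continuity_pt_mult; [apply Hf | reg]. }
      rewrite RInt_binomial_term, scal_sum by exact Hf.
      rewrite (sum_f_R0_zero_tail (fun k => conv_coef_term f cn m j k * t ^ k) (2 * j) (2 * m)).
      - apply sum_eq. intros k Hk.
        unfold conv_coef_term. destruct (Nat.leb_spec k (2 * j)); [ring | lia].
      - lia.
      - intros i Hi. unfold conv_coef_term. destruct (Nat.leb_spec i (2 * j)); [lia | ring]. }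
  rewrite sum_f_R0_swap. apply sum_eq. intros k _.
  unfold conv_coef. rewrite Rmult_comm, scal_sum. reflexivity.
Qed.

(* Only [j = m] reaches degrees [>= 2 m - 1], with the moments [moment f 0] in degree
   [2 m] and [moment f 1] in degree [2 m - 1]. *)
Lemma conv_coef_top (f : R -> R) (cn : R) (m k : nat) : (2 * m - 1 <= k)%nat ->
  conv_coef f cn m k = conv_coef_term f cn m m k.
Proof.
  intros Hk. destruct m as [|m'].
  - reflexivity.
  - unfold conv_coef. rewrite (tech5 _ m').
    rewrite sum_eq_R0; [ring |]. intros j Hj.
    unfold conv_coef_term. destruct (Nat.leb_spec k (2 * j)); [lia | reflexivity].
Qed.

Lemma conv_is_poly_of_degree (f : R -> R) (cn : R) (m : nat) :
  everywhere_continuous f -> (1 <= m)%nat -> 0 < cn ->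
  moment f 0 = 0 -> moment f 1 <> 0 -> is_poly_of_degree (conv f cn m) (2 * m - 1).
Proof.
  intros Hf Hm Hcn H0 H1.
  exists (conv_coef f cn m). split.
  - rewrite conv_coef_top by lia. unfold conv_coef_term.
    destruct (Nat.leb_spec (2 * m - 1) (2 * m)); [|lia].
    replace (2 * m - (2 * m - 1))%nat with 1%nat by lia.
    repeat (first [apply binomial_C_neq_0 | apply pow_nonzero; lra | exact H1 | lra
                  | apply Rmult_integral_contrapositive_currified]).
  - intros t. rewrite conv_poly_expansion by exact Hf.
    replace (2 * m)%nat with (S (2 * m - 1)) by lia. rewrite tech5.
    replace (S (2 * m - 1)) with (2 * m)%nat by lia.
    rewrite conv_coef_top by lia. unfold conv_coef_term.
    destruct (Nat.leb_spec (2 * m) (2 * m)); [|lia].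
    rewrite Nat.sub_diag, H0. ring.
Qed.

Lemma moment_0_odd (f : R -> R) : everywhere_continuous f -> (forall t, f (-t) = - f t) ->
  moment f 0 = 0.
Proof.
  intros Hc Ho. unfold moment. rewrite RInt_symmetric_fold.
  - rewrite (RInt_ext _ (fun _ => 0)), RInt_const_R; [ring |].
    intros x _. rewrite Ho. simpl. ring.
  - intro x. apply continuity_pt_mult; [apply Hc | reg].
Qed.

Lemma moment_1_le (f : R -> R) : everywhere_continuous f -> (forall t, f (-t) = - f t) ->
  (forall t, 0 <= t -> 0 <= f t <= 1) -> (forall t, 1/2 <= t <= 3/4 -> f t = 1) ->
  moment f 1 <= -1/4.
Proof.
  intros Hc Ho H01 H1. unfold moment. rewrite RInt_symmetric_fold.
  2:{ intro x. apply continuity_pt_mult; [apply Hc | reg]. }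
  assert (Hk : forall x, continuity_pt (fun x => 2 * x * f x) x)
    by (intros x; apply (continuity_pt_mult (fun x => 2 * x) f); [reg | apply Hc]).
  rewrite (RInt_ext _ (fun x => - (2 * x * f x))) by (intros x _; rewrite Ho; simpl; ring).
  rewrite RInt_opp_R by (apply ex_RInt_everywhere_continuous; exact Hk).
  assert (1 * (3/4 - 1/2) <= RInt (fun x => 2 * x * f x) (1/2) (3/4)).
  { apply RInt_ge_const; [lra | auto |]. intros x Hx. rewrite H1 by lra. lra. }
  assert (RInt (fun x => 2 * x * f x) (1/2) (3/4) <= RInt (fun x => 2 * x * f x) 0 1).
  { apply RInt_subinterval_le; auto; try lra. intros x Hx. destruct (H01 x); [lra | nra]. }
  lra.
Qed.

(** * Concentration of the kernel *)

Lemma bump_continuous m : everywhere_continuous (bump m).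
Proof. intro; unfold bump; reg. Qed.

Lemma phi_continuous cn m : everywhere_continuous (phi cn m).
Proof. intro; unfold phi, bump; reg. Qed.

Lemma phi_even cn m y : phi cn m (-y) = phi cn m y.
Proof. unfold phi, bump. replace ((-y) ^ 2) with (y ^ 2) by ring. reflexivity. Qed.

Lemma bump_nonneg m y : y ^ 2 <= 4 -> 0 <= bump m y.
Proof. intros; unfold bump; apply pow_le; lra. Qed.

Lemma phi_nonneg cn m y : 0 <= cn -> y ^ 2 <= 4 -> 0 <= phi cn m y.
Proof. intros; unfold phi; apply Rmult_le_pos, bump_nonneg; auto. Qed.

Lemma phi_le cn m y1 y2 : 0 <= cn -> y1 ^ 2 <= y2 ^ 2 -> y2 ^ 2 <= 4 ->
  phi cn m y2 <= phi cn m y1.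
Proof. intros; unfold phi, bump; apply Rmult_le_compat_l; auto. apply pow_incr; lra. Qed.

Lemma pow_le_1 x k : 0 <= x <= 1 -> x ^ k <= 1.
Proof. intros; rewrite <- (pow1 k); apply pow_incr; lra. Qed.

Lemma pow_incr_nonneg x y k : 0 <= x <= y -> 0 <= x ^ k <= y ^ k.
Proof. intros; split; [apply pow_le | apply pow_incr]; lra. Qed.

Lemma pow_one_minus_ge u m : 0 <= u <= 1 -> 1 - INR m * u <= (1 - u) ^ m.
Proof.
  intros Hu; induction m.
  - simpl; lra.
  - rewrite S_INR. simpl. pose proof (pos_INR m).
    destruct (Rle_lt_dec 0 (1 - INR m * u)).
    + assert (0 <= INR m * u * u) by (apply Rmult_le_pos; [apply Rmult_le_pos|]; lra).
      assert ((1 - u) * (1 - INR m * u) <= (1 - u) * (1 - u) ^ m)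
        by (apply Rmult_le_compat_l; lra).
      nra.
    + assert (0 <= (1 - u) ^ m) by (apply pow_le; lra). nra.
Qed.

Lemma exp_le x y : x <= y -> exp x <= exp y.
Proof. intros [H | <-]; [left; apply exp_increasing; auto | lra]. Qed.

Lemma exp_pow x m : exp x ^ m = exp (x * INR m).
Proof.
  induction m.
  - simpl. rewrite Rmult_0_r, exp_0. reflexivity.
  - simpl pow. rewrite IHm, <- exp_plus, S_INR. f_equal; ring.
Qed.

Lemma pow_one_minus_le_exp u m : 0 <= u <= 1 -> (1 - u) ^ m <= exp (- u * INR m).
Proof.
  intros Hu. rewrite <- exp_pow. apply pow_incr.
  pose proof (exp_ineq1_le (-u)). lra.
Qed.

Lemma exp_minus_4_le : exp (-4) <= 1/16.
Proof.
  replace (-4) with (- (1 + 1 + 1 + 1)) by ring. rewrite exp_Ropp, !exp_plus.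
  pose proof (exp_ineq1_le 1). set (e := exp 1) in *.
  assert (4 <= e * e) by nra.
  assert (16 <= e * e * e * e) by (replace (e * e * e * e) with ((e * e) * (e * e)) by ring; nra).
  apply Rmult_le_reg_l with (e * e * e * e); [lra|].
  rewrite Rinv_r by lra. lra.
Qed.

Lemma RInt_exp_decay a p q : 0 < a ->
  RInt (fun y => exp (- y / a)) p q = a * exp (- p / a) - a * exp (- q / a).
Proof.
  intros Ha. apply is_RInt_unique.
  replace (a * exp (- p / a) - a * exp (- q / a))
    with (minus (- a * exp (- q / a)) (- a * exp (- p / a)))
    by (unfold minus, plus, opp; simpl; ring).
  apply (is_RInt_derive (fun y => - a * exp (- y / a))).
  - intros x _. auto_derive; auto. unfold Rdiv. field. lra.
  - intros x _. apply continuity_pt_filterlim. reg.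
Qed.

(* With [m a ^ 2 = 1], the bump [(1 - y ^ 2 / 4) ^ m] has width of order [a]. *)
Section BumpWidth.
Variables (a : R) (m : nat).
Hypothesis a_pos : 0 < a.
Hypothesis a_small : a <= 1/10.
Hypothesis m_a : INR m * a ^ 2 = 1.

Lemma bump_integral_ge : 3/2 * a <= RInt (bump m) (-2) 2.
Proof.
  apply Rle_trans with (RInt (bump m) (-a) a).
  - replace (3/2 * a) with (3/4 * (a - - a)) by lra.
    apply RInt_ge_const; [lra | intros; apply bump_continuous |].
    intros x Hx. unfold bump.
    eapply Rle_trans; [| apply pow_one_minus_ge; nra].
    assert (x ^ 2 <= a ^ 2) by nra. pose proof (pos_INR m).
    assert (INR m * x ^ 2 <= INR m * a ^ 2) by (apply Rmult_le_compat_l; lra). lra.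
  - apply RInt_subinterval_le; try lra.
    + intros; apply bump_continuous.
    + intros; apply bump_nonneg; nra.
Qed.

Lemma bump_tail_le : RInt (bump m) (4 * a) 2 <= a * exp (-4).
Proof.
  apply Rle_trans with (RInt (fun y => exp (- y / a)) (4 * a) 2).
  - apply RInt_le_continuity_pt; [lra | intros; apply bump_continuous | intros; reg |].
    intros x Hx. unfold bump. eapply Rle_trans; [apply pow_one_minus_le_exp; nra|].
    apply exp_le.
    assert (x / a <= x ^ 2 / 4 * INR m).
    { apply Rmult_le_reg_r with (a ^ 2); [nra|]. rewrite Rmult_assoc, m_a.
      replace (x / a * a ^ 2) with (x * a) by (field; lra). nra. }
    unfold Rdiv in *. lra.
  - rewrite RInt_exp_decay by auto. replace (- (4 * a) / a) with (-4) by (field; lra).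
    match goal with |- _ - a * exp ?z <= _ =>
      assert (0 < a * exp z) by (apply Rmult_lt_0_compat; [lra | apply exp_pos]) end.
    lra.
Qed.

Variable cn : R.
Hypothesis cn_pos : 0 < cn.
Hypothesis phi_normalized : RInt (phi cn m) (-2) 2 = 1.

Lemma phi_integral_eq p q : RInt (phi cn m) p q = cn * RInt (bump m) p q.
Proof. apply RInt_scal_R, ex_RInt_everywhere_continuous, bump_continuous. Qed.

Lemma cn_mul_a_le : cn * a <= 2/3.
Proof.
  pose proof bump_integral_ge. rewrite phi_integral_eq in phi_normalized. nra.
Qed.

Lemma phi_tail_le : RInt (phi cn m) (4 * a) 2 <= 1/24.
Proof.
  pose proof bump_tail_le; pose proof cn_mul_a_le; pose proof exp_minus_4_le.
  rewrite phi_integral_eq. assert (0 < exp (-4)) by apply exp_pos.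
  apply Rle_trans with (cn * (a * exp (-4))); [apply Rmult_le_compat_l; lra | nra].
Qed.

Lemma phi_center_ge : 1 - 2/24 <= RInt (phi cn m) (- (4 * a)) (4 * a).
Proof.
  pose proof phi_tail_le.
  rewrite (RInt_Chasles_continuity_pt _ (-2) (- (4 * a)) 2),
    (RInt_Chasles_continuity_pt _ (- (4 * a)) (4 * a) 2) in phi_normalized
    by (try lra; intros; apply phi_continuous).
  assert (RInt (phi cn m) (-2) (- (4 * a)) = RInt (phi cn m) (4 * a) 2).
  { assert (E := RInt_comp_opp (phi cn m) (4 * a) 2
      (ex_RInt_everywhere_continuous _ _ _ (phi_continuous cn m))).
    replace (Ropp 2) with (-2) in E by ring. rewrite E.
    apply RInt_ext; intros; apply phi_even. }
  lra.
Qed.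

End BumpWidth.

Lemma cn_ge (cn : R) (m : nat) : 0 < cn -> RInt (phi cn m) (-2) 2 = 1 -> 1/4 <= cn.
Proof.
  intros Hcn Hnorm. rewrite phi_integral_eq in Hnorm.
  assert (RInt (bump m) (-2) 2 <= 1 * (2 - -2)).
  { apply RInt_le_const; [lra | intros; apply bump_continuous |].
    intros x Hx. unfold bump. apply pow_le_1.
    assert (0 <= x ^ 2 <= 4) by (split; nra). lra. }
  assert (0 <= RInt (bump m) (-2) 2).
  { apply RInt_ge_0_continuity_pt; [lra | intros; apply bump_continuous |].
    intros; apply bump_nonneg; nra. }
  assert (cn * RInt (bump m) (-2) 2 <= cn * 4) by (apply Rmult_le_compat_l; lra).
  lra.
Qed.

(** * Shape of [P_n] on [[0, 1]] *)

Lemma RInt_odd_mul_fold (f K : R -> R) t :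
  everywhere_continuous f -> everywhere_continuous K -> (forall x, f (-x) = - f x) ->
  RInt (fun x => f x * K (t - x)) (-1) 1 = RInt (fun x => f x * (K (t - x) - K (t + x))) 0 1.
Proof.
  intros Hf HK Hodd. rewrite RInt_symmetric_fold.
  - apply RInt_ext. intros x _. rewrite Hodd. replace (t - - x) with (t + x) by ring. req_R; ring.
  - apply everywhere_continuous_mult, everywhere_continuous_comp_sub; auto.
Qed.

Lemma odd_fold_continuous (f K : R -> R) t :
  everywhere_continuous f -> everywhere_continuous K ->
  everywhere_continuous (fun x => f x * (K (t - x) - K (t + x))).
Proof.
  intros Hf HK. apply everywhere_continuous_mult, everywhere_continuous_minus; auto.
  - apply everywhere_continuous_comp_sub, HK.
  - apply everywhere_continuous_comp_add, HK.
Qed.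

Section ConvolutionShape.
Variables (f : R -> R) (cn a : R) (m : nat).
Hypothesis a_pos : 0 < a.
Hypothesis a_small : a <= 1/10.
Hypothesis m_a : INR m * a ^ 2 = 1.
Hypothesis cn_pos : 0 < cn.
Hypothesis phi_normalized : RInt (phi cn m) (-2) 2 = 1.
Hypothesis f_continuous : everywhere_continuous f.
Hypothesis f_odd : forall t, f (-t) = - f t.
Hypothesis f_unit_range : forall t, 0 <= t -> 0 <= f t <= 1.
Hypothesis f_one : forall t, a <= t <= 1 - a -> f t = 1.

Lemma conv_fold t :
  conv f cn m t = RInt (fun x => f x * (phi cn m (t - x) - phi cn m (t + x))) 0 1.
Proof. apply RInt_odd_mul_fold; auto. apply phi_continuous. Qed.

Lemma conv_odd t : conv f cn m (-t) = - conv f cn m t.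
Proof.
  rewrite !conv_fold, <- RInt_opp_R.
  - apply RInt_ext. intros x _.
    rewrite <- (phi_even cn m (-t - x)), <- (phi_even cn m (-t + x)).
    replace (- (-t - x)) with (t + x) by ring. replace (- (-t + x)) with (t - x) by ring. req_R; ring.
  - apply ex_RInt_everywhere_continuous, odd_fold_continuous; auto. apply phi_continuous.
Qed.

Let fold_integrand t := fun x => f x * (phi cn m (t - x) - phi cn m (t + x)).

Lemma fold_integrand_continuous t : everywhere_continuous (fold_integrand t).
Proof. apply odd_fold_continuous; auto. apply phi_continuous. Qed.

Lemma fold_integrand_nonneg t x : 0 <= t <= 1 -> 0 <= x <= 1 -> 0 <= fold_integrand t x.
Proof.
  intros Ht Hx. destruct (f_unit_range x) as [h1 h2]; [lra|].
  apply Rmult_le_pos; auto. assert (phi cn m (t + x) <= phi cn m (t - x)) by (apply phi_le; nra).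
  lra.
Qed.

Lemma conv_unit_range t : 0 <= t <= 1 -> 0 <= conv f cn m t <= 1.
Proof.
  intros Ht. rewrite conv_fold. split.
  - apply RInt_ge_0_continuity_pt; [lra | intros; apply fold_integrand_continuous |].
    intros; apply fold_integrand_nonneg; lra.
  - apply Rle_trans with (RInt (fun x => phi cn m (t - x)) 0 1).
    + apply RInt_le_continuity_pt; [lra | intros; apply fold_integrand_continuous | |].
      * intros; apply everywhere_continuous_comp_sub, phi_continuous.
      * intros x Hx. destruct (f_unit_range x) as [h1 h2]; [lra|].
        assert (0 <= phi cn m (t + x)) by (apply phi_nonneg; nra).
        assert (phi cn m (t + x) <= phi cn m (t - x)) by (apply phi_le; nra).
        assert (f x * (phi cn m (t - x) - phi cn m (t + x))
                <= 1 * (phi cn m (t - x) - phi cn m (t + x))) by (apply Rmult_le_compat_r; lra).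
        lra.
    + rewrite RInt_comp_shift_neg by apply phi_continuous. rewrite <- phi_normalized.
      apply RInt_subinterval_le; try lra.
      * intros; apply phi_continuous.
      * intros; apply phi_nonneg; nra.
Qed.

Lemma conv_ge_7_8 t : 5 * a <= t <= 1/2 -> 7/8 <= conv f cn m t.
Proof.
  intros Ht.
  pose proof (phi_tail_le a m a_pos a_small m_a cn cn_pos phi_normalized) as Htail.
  pose proof (phi_center_ge a m a_pos a_small m_a cn cn_pos phi_normalized) as Hcenter.
  rewrite conv_fold.
  apply Rle_trans with (RInt (fold_integrand t) (t - 4 * a) (t + 4 * a)).
  2:{ apply RInt_subinterval_le; try lra; intros; [apply fold_integrand_continuous |].
      apply fold_integrand_nonneg; lra. }
  rewrite (RInt_ext _ (fun x => phi cn m (t - x) - phi cn m (t + x))).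
  2:{ intros x Hx. rewrite Rmin_left, Rmax_right in Hx by lra.
      unfold fold_integrand. rewrite f_one by lra. req_R; ring. }
  rewrite RInt_minus_R
    by (try apply everywhere_continuous_comp_sub; try apply everywhere_continuous_comp_add;
        apply phi_continuous).
  rewrite RInt_comp_shift_neg, RInt_comp_shift_pos by apply phi_continuous.
  replace (t - (t + 4 * a)) with (- (4 * a)) by ring. replace (t - (t - 4 * a)) with (4 * a) by ring.
  assert (RInt (phi cn m) (t + (t - 4 * a)) (t + (t + 4 * a)) <= RInt (phi cn m) (4 * a) 2).
  { apply RInt_subinterval_le; try lra; intros; [apply phi_continuous | apply phi_nonneg; nra]. }
  lra.
Qed.

End ConvolutionShape.

(** * Derivatives of [P_n] beyond [t = 3] *)

Lemma is_derive_eq (g : R -> R) x l l' : is_derive g x l -> l = l' -> is_derive g x l'.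
Proof. intros H <-; exact H. Qed.

Lemma is_derive_RInt_mul_shift (f K dK : R -> R) t :
  everywhere_continuous f -> (forall y, is_derive K y (dK y)) -> everywhere_continuous dK ->
  is_derive (fun t => RInt (fun x => f x * K (t - x)) (-1) 1) t
    (RInt (fun x => f x * dK (t - x)) (-1) 1).
Proof.
  intros Hf HK HdK.
  assert (HD : forall u v, is_derive (fun z => f v * K (z - v)) u (f v * dK (u - v))).
  { intros u v. eapply is_derive_eq; [apply is_derive_scal, (is_derive_comp K (fun z => z - v)) |].
    - apply HK.
    - apply (is_derive_minus (fun z => z) (fun _ => v)); [apply is_derive_id | apply is_derive_const].
    - unfold scal, minus, plus, opp, one, zero; simpl; unfold mult; simpl. ring. }
  assert (HK_cont : everywhere_continuous K).
  { intro y. apply continuity_pt_filterlim, (@ex_derive_continuous R_AbsRing R_NormedModule).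
    eexists; apply HK. }
  eapply is_derive_eq; [apply (is_derive_RInt_param (fun u x => f x * K (u - x)) (-1) 1 t) |].
  - apply filter_forall. intros x0 s _. eexists. apply HD.
  - intros s _. apply continuity_2d_pt_ext with (fun u v => f v * dK (u - v)).
    { intros; symmetry; apply is_derive_unique, HD. }
    apply continuity_2d_pt_mult.
    + apply (continuity_1d_2d_pt_comp f (fun u v => v)); [apply Hf | apply continuity_2d_pt_id2].
    + apply (continuity_1d_2d_pt_comp dK (fun u v => u - v)); [apply HdK |].
      apply continuity_2d_pt_minus; [apply continuity_2d_pt_id1 | apply continuity_2d_pt_id2].
  - apply filter_forall. intros y. apply ex_RInt_everywhere_continuous.
    apply everywhere_continuous_mult, everywhere_continuous_comp_sub; auto.
  - apply RInt_ext. intros; apply is_derive_unique, HD.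
Qed.

Definition dphi (cn : R) (m : nat) (y : R) : R :=
  cn * (INR m * (- y / 2) * (1 - y ^ 2 / 4) ^ pred m).
Definition ddphi (cn : R) (m : nat) (y : R) : R :=
  cn * INR m * ((-1/2) * (1 - y ^ 2 / 4) ^ pred m
                + (- y / 2) * (INR (pred m) * (- y / 2) * (1 - y ^ 2 / 4) ^ pred (pred m))).

Lemma phi_derive cn m y : is_derive (phi cn m) y (dphi cn m y).
Proof.
  unfold phi, bump, dphi. apply is_derive_scal.
  apply (is_derive_pow (fun y => 1 - y ^ 2 / 4)). auto_derive; auto. field.
Qed.

Lemma dphi_derive cn m y : is_derive (dphi cn m) y (ddphi cn m y).
Proof.
  unfold ddphi, dphi.
  assert (H1 : is_derive (fun y => INR m * (- y / 2)) y (INR m * (-1/2)))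
    by (auto_derive; auto; field).
  assert (H2 := is_derive_pow (fun y => 1 - y ^ 2 / 4) (pred m) y (- y / 2)
                  ltac:(auto_derive; auto; field)).
  assert (H3 := is_derive_mult _ _ y _ _ H1 H2 ltac:(intros; apply Rmult_comm)).
  eapply is_derive_eq; [apply is_derive_scal, H3 |].
  unfold plus, mult; simpl. field.
Qed.

Lemma dphi_continuous cn m : everywhere_continuous (dphi cn m).
Proof. intro; unfold dphi; reg. Qed.

Lemma ddphi_continuous cn m : everywhere_continuous (ddphi cn m).
Proof. intro; unfold ddphi; reg. Qed.

(* For [|y| >= 2] the base [1 - y ^ 2 / 4] is negative: we factor out the sign
   [(-1) ^ m] and keep the nonnegative magnitudes, written in [u := y ^ 2 / 4 - 1]. *)
Definition dphi_mag (cn : R) (m : nat) (y : R) : R :=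
  cn * INR m * (y / 2) * (y ^ 2 / 4 - 1) ^ pred m.
Definition ddphi_mag (cn : R) (m : nat) (y : R) : R :=
  cn * INR m * ((1/2) * (y ^ 2 / 4 - 1) ^ pred m
                + INR (pred m) * (y ^ 2 / 4) * (y ^ 2 / 4 - 1) ^ pred (pred m)).

Lemma bump_base_pow y k : (1 - y ^ 2 / 4) ^ k = (-1) ^ k * (y ^ 2 / 4 - 1) ^ k.
Proof. rewrite <- Rpow_mult_distr. f_equal. ring. Qed.

Lemma dphi_sign cn m y : (1 <= m)%nat -> dphi cn m y = (-1) ^ m * dphi_mag cn m y.
Proof.
  intros Hm. destruct m as [|k]; [lia|]. unfold dphi, dphi_mag. simpl pred.
  rewrite bump_base_pow. replace ((-1) ^ S k) with (-1 * (-1) ^ k) by (simpl; ring). field.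
Qed.

Lemma ddphi_sign cn m y : (2 <= m)%nat -> ddphi cn m y = (-1) ^ m * ddphi_mag cn m y.
Proof.
  intros Hm. destruct m as [|[|k]]; [lia | lia |]. unfold ddphi, ddphi_mag. simpl pred.
  rewrite !bump_base_pow.
  replace ((-1) ^ S (S k)) with ((-1) ^ k) by (simpl; ring).
  replace ((-1) ^ S k) with (-1 * (-1) ^ k) by (simpl; ring). field.
Qed.

Lemma dphi_mag_continuous cn m : everywhere_continuous (dphi_mag cn m).
Proof. intro; unfold dphi_mag; reg. Qed.

Lemma ddphi_mag_continuous cn m : everywhere_continuous (ddphi_mag cn m).
Proof. intro; unfold ddphi_mag; reg. Qed.

Lemma dphi_mag_mono cn m y1 y2 : 0 <= cn -> 2 <= y1 <= y2 ->
  0 <= dphi_mag cn m y1 <= dphi_mag cn m y2.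
Proof.
  intros Hc Hy. pose proof (pos_INR m).
  destruct (pow_incr_nonneg (y1 ^ 2 / 4 - 1) (y2 ^ 2 / 4 - 1) (pred m)) as [h1 h2]; [nra|].
  unfold dphi_mag. assert (0 <= cn * INR m) by (apply Rmult_le_pos; lra).
  split.
  - apply Rmult_le_pos; [apply Rmult_le_pos |]; lra.
  - apply Rmult_le_compat; try lra; [apply Rmult_le_pos; lra | apply Rmult_le_compat_l; lra].
Qed.

Lemma ddphi_mag_mono cn m y1 y2 : 0 <= cn -> 2 <= y1 <= y2 ->
  0 <= ddphi_mag cn m y1 <= ddphi_mag cn m y2.
Proof.
  intros Hc Hy. pose proof (pos_INR m). pose proof (pos_INR (pred m)).
  destruct (pow_incr_nonneg (y1 ^ 2 / 4 - 1) (y2 ^ 2 / 4 - 1) (pred m)); [nra|].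
  destruct (pow_incr_nonneg (y1 ^ 2 / 4 - 1) (y2 ^ 2 / 4 - 1) (pred (pred m))); [nra|].
  assert (0 <= INR (pred m) * (y1 ^ 2 / 4) <= INR (pred m) * (y2 ^ 2 / 4))
    by (split; [apply Rmult_le_pos | apply Rmult_le_compat_l]; nra).
  assert (0 <= INR (pred m) * (y1 ^ 2 / 4) * (y1 ^ 2 / 4 - 1) ^ pred (pred m)
            <= INR (pred m) * (y2 ^ 2 / 4) * (y2 ^ 2 / 4 - 1) ^ pred (pred m))
    by (split; [apply Rmult_le_pos | apply Rmult_le_compat]; lra).
  unfold ddphi_mag. assert (0 <= cn * INR m) by (apply Rmult_le_pos; lra).
  split; [apply Rmult_le_pos | apply Rmult_le_compat_l]; lra.
Qed.

Section ConvolutionDerivatives.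
Variables (f : R -> R) (cn : R) (m : nat).
Hypothesis m_ge_2 : (2 <= m)%nat.
Hypothesis cn_pos : 0 < cn.
Hypothesis f_continuous : everywhere_continuous f.
Hypothesis f_odd : forall t, f (-t) = - f t.
Hypothesis f_unit_range : forall t, 0 <= t -> 0 <= f t <= 1.
Hypothesis f_one : forall t, 1/2 <= t <= 3/4 -> f t = 1.

Definition dconv t := RInt (fun x => f x * dphi cn m (t - x)) (-1) 1.
Definition ddconv t := RInt (fun x => f x * ddphi cn m (t - x)) (-1) 1.

Lemma conv_derive t : is_derive (conv f cn m) t (dconv t).
Proof.
  apply is_derive_RInt_mul_shift; auto; [apply phi_derive | apply dphi_continuous].
Qed.

Lemma dconv_derive t : is_derive dconv t (ddconv t).
Proof.
  apply is_derive_RInt_mul_shift; auto; [apply dphi_derive | apply ddphi_continuous].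
Qed.

Lemma sign_pow_sq : (-1) ^ m * (-1) ^ m = 1.
Proof. rewrite <- Rpow_mult_distr. replace (-1 * -1) with 1 by ring. apply pow1. Qed.

Lemma dconv_fold t : - (-1) ^ m * dconv t =
  RInt (fun x => f x * (dphi_mag cn m (t + x) - dphi_mag cn m (t - x))) 0 1.
Proof.
  unfold dconv. rewrite RInt_odd_mul_fold by (auto; apply dphi_continuous).
  rewrite <- RInt_scal_R
    by (apply ex_RInt_everywhere_continuous, odd_fold_continuous; auto; apply dphi_continuous).
  apply RInt_ext. intros x _. rewrite !dphi_sign by lia.
  pose proof sign_pow_sq. req_R.
  transitivity (f x * (dphi_mag cn m (t + x) - dphi_mag cn m (t - x)) * ((-1) ^ m * (-1) ^ m));
    [ring | rewrite H; ring].
Qed.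

Lemma ddconv_fold t : - (-1) ^ m * ddconv t =
  RInt (fun x => f x * (ddphi_mag cn m (t + x) - ddphi_mag cn m (t - x))) 0 1.
Proof.
  unfold ddconv. rewrite RInt_odd_mul_fold by (auto; apply ddphi_continuous).
  rewrite <- RInt_scal_R
    by (apply ex_RInt_everywhere_continuous, odd_fold_continuous; auto; apply ddphi_continuous).
  apply RInt_ext. intros x _. rewrite !ddphi_sign by lia.
  pose proof sign_pow_sq. req_R.
  transitivity (f x * (ddphi_mag cn m (t + x) - ddphi_mag cn m (t - x)) * ((-1) ^ m * (-1) ^ m));
    [ring | rewrite H; ring].
Qed.

Lemma mag_fold_continuous (M : R -> R) t : everywhere_continuous M ->
  everywhere_continuous (fun x => f x * (M (t + x) - M (t - x))).
Proof.
  intros HM. apply everywhere_continuous_mult, everywhere_continuous_minus; auto.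
  - apply everywhere_continuous_comp_add, HM.
  - apply everywhere_continuous_comp_sub, HM.
Qed.

Lemma ddconv_signed_nonneg t : 3 <= t -> 0 <= - (-1) ^ m * ddconv t.
Proof.
  intros Ht. rewrite ddconv_fold. apply RInt_ge_0_continuity_pt; [lra | |].
  - intros; apply mag_fold_continuous, ddphi_mag_continuous.
  - intros x Hx. destruct (f_unit_range x) as [h1 h2]; [lra|].
    destruct (ddphi_mag_mono cn m (t - x) (t + x)); try lra. apply Rmult_le_pos; lra.
Qed.

Lemma dphi_mag_gap : cn / 2 <= dphi_mag cn m (7/2) - dphi_mag cn m (5/2).
Proof.
  unfold dphi_mag. pose proof m_ge_2 as Hm. apply le_INR in Hm.
  replace (INR 2) with 2 in Hm by (simpl; ring).
  assert (1 <= ((7/2) ^ 2 / 4 - 1) ^ pred m) by (apply pow_R1_Rle; lra).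
  assert (0 <= ((5/2) ^ 2 / 4 - 1) ^ pred m <= 1).
  { split; [apply pow_le; lra | apply pow_le_1; lra]. }
  assert (0 <= cn * INR m) by nra.
  assert (cn * INR m * (7/2/2) * 1 <= cn * INR m * (7/2/2) * ((7/2) ^ 2 / 4 - 1) ^ pred m)
    by (apply Rmult_le_compat_l; nra).
  assert (cn * INR m * (5/2/2) * ((5/2) ^ 2 / 4 - 1) ^ pred m <= cn * INR m * (5/2/2) * 1)
    by (apply Rmult_le_compat_l; nra).
  nra.
Qed.

Lemma dconv_signed_at_3 : cn / 8 <= - (-1) ^ m * dconv 3.
Proof.
  rewrite dconv_fold.
  apply Rle_trans with
    (RInt (fun x => f x * (dphi_mag cn m (3 + x) - dphi_mag cn m (3 - x))) (1/2) (3/4)).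
  - replace (cn / 8) with (cn / 2 * (3/4 - 1/2)) by field.
    apply RInt_ge_const; [lra | intros; apply mag_fold_continuous, dphi_mag_continuous |].
    intros x Hx. rewrite f_one, Rmult_1_l by lra. pose proof dphi_mag_gap.
    destruct (dphi_mag_mono cn m (7/2) (3 + x)); try lra.
    destruct (dphi_mag_mono cn m (3 - x) (5/2)); try lra.
  - apply RInt_subinterval_le; try lra.
    + intros; apply mag_fold_continuous, dphi_mag_continuous.
    + intros x Hx. destruct (f_unit_range x) as [h1 h2]; [lra|].
      destruct (dphi_mag_mono cn m (3 - x) (3 + x)); try lra. apply Rmult_le_pos; lra.
Qed.

End ConvolutionDerivatives.

(** * An oscillatory integral estimate *)

Lemma continuity_pt_of_derive (Q Qd : R -> R) : (forall t, is_derive Q t (Qd t)) ->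
  everywhere_continuous Q.
Proof.
  intros H t. apply continuity_pt_filterlim, (@ex_derive_continuous R_AbsRing R_NormedModule).
  eexists; apply H.
Qed.

(* Van der Corput's lemma for [sin Q(t) / t]: if the phase is convex with [Q' >= lam]
   from [t0] on, an integration by parts against [1 / (t Q'(t))] bounds the integral. *)
Section OscillatoryTail.
Variables (Q Qd Qdd : R -> R) (lam t0 : R).
Hypothesis lam_pos : 0 < lam.
Hypothesis t0_pos : 0 < t0.
Hypothesis Q_derive : forall t, is_derive Q t (Qd t).
Hypothesis Qd_derive : forall t, is_derive Qd t (Qdd t).
Hypothesis Qdd_continuous : everywhere_continuous Qdd.
Hypothesis Qdd_nonneg : forall t, t0 <= t -> 0 <= Qdd t.
Hypothesis Qd_t0 : lam <= Qd t0.

Lemma Qd_ge t : t0 <= t -> lam <= Qd t.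
Proof.
  intros Ht.
  assert (E := RInt_derive_continuity_pt Qd Qdd t0 t Ht (fun s _ => Qd_derive s)
                 (fun s _ => Qdd_continuous s)).
  assert (0 <= RInt Qdd t0 t) by (apply RInt_ge_0_continuity_pt; auto; intros; apply Qdd_nonneg; lra).
  lra.
Qed.

Lemma t_Qd_pos t : t0 <= t -> 0 < t * Qd t.
Proof. intros Ht; pose proof (Qd_ge t Ht). apply Rmult_lt_0_compat; lra. Qed.

Definition phase_weight t := / (t * Qd t).
Definition phase_dweight t := - (Qd t + t * Qdd t) / (t * Qd t) ^ 2.
Definition phase_primitive t := - cos (Q t) * phase_weight t.

Lemma phase_weight_derive t : t0 <= t -> is_derive phase_weight t (phase_dweight t).
Proof.
  intros Ht. pose proof (t_Qd_pos t Ht). unfold phase_weight, phase_dweight.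
  eapply is_derive_eq; [apply (is_derive_inv (fun t => t * Qd t)) |].
  - apply (is_derive_mult (fun t => t) Qd); [apply is_derive_id | apply Qd_derive |].
    intros; apply Rmult_comm.
  - lra.
  - unfold plus, mult, one; simpl. pose proof (Qd_ge t Ht). req_R. field. split; lra.
Qed.

Lemma phase_dweight_continuous t : t0 <= t -> continuity_pt phase_dweight t.
Proof.
  intros Ht. pose proof (t_Qd_pos t Ht). pose proof (continuity_pt_of_derive _ _ Qd_derive).
  unfold phase_dweight.
  apply (continuity_pt_div (fun t => - (Qd t + t * Qdd t)) (fun t => (t * Qd t) ^ 2)).
  - apply continuity_pt_opp, continuity_pt_plus; auto.
    apply continuity_pt_mult; [apply continuity_pt_id | auto].
  - apply (continuity_pt_comp (fun t => t * Qd t) (fun y => y ^ 2)); [| reg].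
    apply continuity_pt_mult; [apply continuity_pt_id | auto].
  - apply pow_nonzero; lra.
Qed.

Lemma phase_dweight_nonpos t : t0 <= t -> phase_dweight t <= 0.
Proof.
  intros Ht. pose proof (t_Qd_pos t Ht). pose proof (Qd_ge t Ht). pose proof (Qdd_nonneg t Ht).
  unfold phase_dweight, Rdiv. apply Rmult_le_0_r.
  - assert (0 <= t * Qdd t) by (apply Rmult_le_pos; lra). lra.
  - left. apply Rinv_0_lt_compat, pow_lt; lra.
Qed.

Lemma phase_primitive_derive t : t0 <= t ->
  is_derive phase_primitive t (sin (Q t) / t - cos (Q t) * phase_dweight t).
Proof.
  intros Ht. pose proof (t_Qd_pos t Ht). pose proof (Qd_ge t Ht). unfold phase_primitive.
  eapply is_derive_eq; [apply (is_derive_mult (fun t => - cos (Q t)) phase_weight) |].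
  - apply (is_derive_opp (fun t => cos (Q t))), (is_derive_comp cos Q);
      [apply is_derive_cos | apply Q_derive].
  - apply phase_weight_derive; auto.
  - intros; apply Rmult_comm.
  - unfold phase_weight, plus, mult, opp, scal; simpl. unfold mult; simpl. req_R. field. split; lra.
Qed.

Lemma cos_phase_dweight_continuous t : t0 <= t ->
  continuity_pt (fun t => cos (Q t) * phase_dweight t) t.
Proof.
  intros Ht. apply continuity_pt_mult; [| apply phase_dweight_continuous; auto].
  apply (continuity_pt_comp Q cos);
    [apply (continuity_pt_of_derive _ _ Q_derive) | apply continuity_cos].
Qed.

Lemma sin_phase_div_continuous t : 0 < t -> continuity_pt (fun t => sin (Q t) / t) t.
Proof.
  intros Ht. apply (continuity_pt_div (fun t => sin (Q t)) (fun t => t));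
    [| apply continuity_pt_id | lra].
  apply (continuity_pt_comp Q sin);
    [apply (continuity_pt_of_derive _ _ Q_derive) | apply continuity_sin].
Qed.

Lemma RInt_sin_phase_div_by_parts p q : t0 <= p -> p <= q ->
  RInt (fun t => sin (Q t) / t) p q =
  phase_primitive q - phase_primitive p + RInt (fun t => cos (Q t) * phase_dweight t) p q.
Proof.
  intros Hp Hpq.
  rewrite <- (RInt_derive_continuity_pt phase_primitive
                (fun t => sin (Q t) / t - cos (Q t) * phase_dweight t) p q)
    by (first [lra | intros; apply phase_primitive_derive; lra
              | intros; apply continuity_pt_minus;
                [apply sin_phase_div_continuous | apply cos_phase_dweight_continuous]; lra]).
  rewrite <- (RInt_plus (fun t => sin (Q t) / t - cos (Q t) * phase_dweight t)).
  - apply RInt_ext. intros x _. unfold plus; simpl. ring.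
  - apply ex_RInt_continuity_pt; auto. intros; apply continuity_pt_minus;
      [apply sin_phase_div_continuous | apply cos_phase_dweight_continuous]; lra.
  - apply ex_RInt_continuity_pt; auto. intros; apply cos_phase_dweight_continuous; lra.
Qed.

Lemma RInt_cos_phase_dweight_abs_le p q : t0 <= p -> p <= q ->
  Rabs (RInt (fun t => cos (Q t) * phase_dweight t) p q) <= phase_weight p - phase_weight q.
Proof.
  intros Hp Hpq.
  eapply Rle_trans.
  { apply abs_RInt_le; auto.
    apply ex_RInt_continuity_pt; auto; intros; apply cos_phase_dweight_continuous; lra. }
  assert (E : RInt (fun t => - phase_dweight t) p q = phase_weight p - phase_weight q).
  { rewrite RInt_opp_R
      by (apply ex_RInt_continuity_pt; auto; intros; apply phase_dweight_continuous; lra).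
    rewrite (RInt_derive_continuity_pt phase_weight phase_dweight p q)
      by (first [lra | intros; apply phase_weight_derive; lra
                | intros; apply phase_dweight_continuous; lra]).
    req_R. ring. }
  rewrite <- E.
  apply RInt_le_continuity_pt; auto.
  - intros. apply (continuity_pt_comp (fun t => cos (Q t) * phase_dweight t) Rabs);
      [apply cos_phase_dweight_continuous; lra | apply Rcontinuity_abs].
  - intros; apply continuity_pt_opp, phase_dweight_continuous; lra.
  - intros x Hx. pose proof (phase_dweight_nonpos x ltac:(lra)).
    rewrite Rabs_mult, (Rabs_left1 (phase_dweight x)) by lra.
    assert (Rabs (cos (Q x)) <= 1) by (apply Rabs_le, COS_bound).
    assert (0 <= - phase_dweight x) by lra. nra.
Qed.

Lemma phase_weight_pos t : t0 <= t -> 0 < phase_weight t.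
Proof. intros Ht. apply Rinv_0_lt_compat, t_Qd_pos, Ht. Qed.

Lemma phase_primitive_abs_le t : t0 <= t -> Rabs (phase_primitive t) <= phase_weight t.
Proof.
  intros Ht. pose proof (phase_weight_pos t Ht). unfold phase_primitive.
  rewrite Rabs_mult, Rabs_Ropp, (Rabs_right (phase_weight t)) by lra.
  assert (Rabs (cos (Q t)) <= 1) by (apply Rabs_le, COS_bound).
  pose proof (Rabs_pos (cos (Q t))). nra.
Qed.

Lemma RInt_sin_phase_div_abs_le p q : t0 <= p -> p <= q ->
  Rabs (RInt (fun t => sin (Q t) / t) p q) <= 2 / (p * lam).
Proof.
  intros Hp Hpq. rewrite RInt_sin_phase_div_by_parts by auto.
  pose proof (RInt_cos_phase_dweight_abs_le p q Hp Hpq).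
  pose proof (phase_primitive_abs_le p Hp). pose proof (phase_primitive_abs_le q ltac:(lra)).
  pose proof (phase_weight_pos q ltac:(lra)).
  assert (phase_weight p <= 1 / (p * lam)).
  { unfold phase_weight. pose proof (Qd_ge p Hp). unfold Rdiv. rewrite Rmult_1_l.
    apply Rinv_le_contravar; [apply Rmult_lt_0_compat; lra | apply Rmult_le_compat_l; lra]. }
  unfold Rdiv in *.
  pose proof (Rabs_triang (phase_primitive q - phase_primitive p)
                (RInt (fun t => cos (Q t) * phase_dweight t) p q)).
  pose proof (Rabs_triang (phase_primitive q) (- phase_primitive p)). rewrite Rabs_Ropp in *.
  unfold Rminus in *. lra.
Qed.

End OscillatoryTail.

(** * Convergence of principal values *)

Lemma RInt_cvg_infty_of_tail_bound (g : R -> R) c c0 K : c <= c0 ->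
  (forall p q, c <= p -> p <= q -> ex_RInt g p q) ->
  (forall p q, c0 <= p -> p <= q -> Rabs (RInt g p q) <= K / p) -> 0 < c0 ->
  exists L, filterlim (fun R => RInt g c R) (Rbar_locally p_infty) (locally L).
Proof.
  intros Hcc Hex Hb Hc0.
  apply (@filterlim_locally_closely R R_CompleteSpace (Rbar_locally p_infty) (Rbar_locally_filter _)).
  apply (@filterlim_closely R R_UniformSpace (Rbar_locally p_infty) _).
  intros eps. pose proof (cond_pos eps).
  set (M := c0 + Rabs K / eps + 1).
  assert (HM : 0 <= Rabs K / eps) by (apply Rdiv_le_0_compat; [apply Rabs_pos | lra]).
  assert (Hkey : forall u v, M < u -> u <= v -> Rabs (RInt g c v - RInt g c u) < eps).
  { intros u v Hu Huv.
    rewrite <- (RInt_Chasles g c u v) by (apply Hex; unfold M in *; lra).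
    unfold plus; simpl. rewrite Rplus_minus_l.
    eapply Rle_lt_trans; [apply Hb; unfold M in *; lra |].
    assert (Hu0 : 0 < u) by (unfold M in *; lra).
    apply Rle_lt_trans with (Rabs K / u).
    { unfold Rdiv. apply Rmult_le_compat_r; [left; apply Rinv_0_lt_compat; lra | apply Rle_abs]. }
    apply (Rmult_lt_reg_r u); auto. unfold Rdiv. rewrite Rmult_assoc, Rinv_l, Rmult_1_r by lra.
    assert (Rabs K / eps < u) by (unfold M in *; lra).
    apply (Rmult_lt_compat_l eps) in H0; [| lra].
    unfold Rdiv in H0. rewrite <- Rmult_assoc, (Rmult_comm eps), Rmult_assoc, Rinv_r, Rmult_1_r in H0
      by lra.
    lra. }
  exists (fun R => M < R). split; [exists M; auto |].
  intros u v Hu Hv. change (Rabs (RInt g c v - RInt g c u) < eps).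
  destruct (Rle_lt_dec u v); [apply Hkey; auto |].
  rewrite <- Rabs_Ropp. replace (- (RInt g c v - RInt g c u)) with (RInt g c u - RInt g c v) by ring.
  apply Hkey; auto; lra.
Qed.

Lemma RInt_cvg_at_right_0_of_bounded (g : R -> R) K : 0 < K ->
  (forall p q, 0 < p -> p <= q -> q <= 1 -> ex_RInt g p q) ->
  (forall x, 0 < x <= 1 -> Rabs (g x) <= K) ->
  exists L, filterlim (fun e => RInt g e 1) (at_right 0) (locally L).
Proof.
  intros HK Hex Hb.
  apply (@filterlim_locally_closely R R_CompleteSpace (at_right 0) (at_right_proper_filter _)
           (fun e => RInt g e 1)).
  apply (proj2 (@filterlim_closely R R_UniformSpace (at_right 0)
                  (@filter_filter R (at_right 0) (at_right_proper_filter 0)) (fun e => RInt g e 1))).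
  intros eps. pose proof (cond_pos eps). set (d := Rmin 1 (eps / (2 * K))).
  assert (Hd : 0 < d) by (apply Rmin_pos; [lra | apply Rdiv_lt_0_compat; lra]).
  assert (Hd1 : d <= 1) by apply Rmin_l.
  assert (Hd2 : K * d <= eps / 2).
  { apply Rle_trans with (K * (eps / (2 * K))); [apply Rmult_le_compat_l; [lra | apply Rmin_r] |].
    right. field. lra. }
  assert (Hkey : forall u v, 0 < u < d -> 0 < v < d -> u <= v ->
            Rabs (RInt g v 1 - RInt g u 1) < eps).
  { intros u v Hu Hv Huv.
    rewrite <- (RInt_Chasles g u v 1) by (apply Hex; lra).
    unfold plus; simpl.
    rewrite <- (Rplus_0_l (RInt g v 1)) at 1. rewrite Rminus_plus_r_r, Rminus_0_l, Rabs_Ropp.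
    eapply Rle_lt_trans; [apply abs_RInt_le; auto; apply Hex; lra |].
    apply Rle_lt_trans with (K * (v - u)); [| nra].
    rewrite <- RInt_const_R. apply RInt_le; auto.
    - apply ex_RInt_norm, Hex; lra.
    - apply ex_RInt_const.
    - intros x Hx. apply Hb. lra. }
  exists (fun e => 0 < e < d). split.
  - exists (mkposreal d Hd). intros y Hy Hy0. split; auto.
    apply Rabs_lt_between in Hy. unfold minus, plus, opp in Hy; simpl in Hy. lra.
  - intros u v Hu Hv. change (Rabs (RInt g v 1 - RInt g u 1) < eps).
    destruct (Rle_lt_dec u v); [apply Hkey; auto |].
    rewrite <- Rabs_Ropp. replace (- (RInt g v 1 - RInt g u 1)) with (RInt g u 1 - RInt g v 1) by ring.
    apply Hkey; auto; lra.
Qed.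

Lemma truncation_eventually :
  filter_prod (at_right 0) (Rbar_locally p_infty) (fun p => 0 < fst p < 1 /\ 1 < snd p).
Proof.
  apply Filter_prod with (fun e => 0 < e < 1) (fun R => 1 < R).
  - exists (mkposreal 1 Rlt_0_1). intros y Hy Hy0. split; auto.
    apply Rabs_lt_between in Hy. unfold minus, plus, opp in Hy; simpl in Hy. lra.
  - exists 1. auto.
  - intros; simpl; auto.
Qed.

Section PrincipalValue.
Variable g : R -> R.
Hypothesis g_integrable : forall p q, 0 < p -> p <= q -> ex_RInt g p q /\ ex_RInt g (-q) (-p).

Lemma trunc_int_fold e R sign : 0 < e -> e <= R -> (forall x, 0 < x -> g (-x) = sign * g x) ->
  trunc_int g e R = (1 + sign) * RInt g e R.
Proof.
  intros He HeR Hsym. destruct (g_integrable e R He HeR) as [Hpos Hneg].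
  unfold trunc_int. rewrite RInt_comp_opp by exact Hneg.
  rewrite (RInt_ext _ (fun x => sign * g x)).
  - rewrite RInt_scal_R by exact Hpos. ring.
  - intros x Hx. rewrite Rmin_left, Rmax_right in Hx by lra. apply Hsym. lra.
Qed.

Lemma pv_integral_odd : (forall x, 0 < x -> g (-x) = - g x) -> pv_integral g 0.
Proof.
  intros Hodd. unfold pv_integral. apply filterlim_ext_loc with (fun _ => 0).
  - eapply filter_imp; [| apply truncation_eventually]. intros [e R] [He HR]. simpl in *.
    rewrite (trunc_int_fold e R (-1)) by (try lra; intros; rewrite Hodd by auto; ring). ring.
  - apply filterlim_const.
Qed.

Lemma pv_integral_even A B : (forall x, 0 < x -> g (-x) = g x) ->
  filterlim (fun e => RInt g e 1) (at_right 0) (locally A) ->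
  filterlim (fun R => RInt g 1 R) (Rbar_locally p_infty) (locally B) ->
  pv_integral g (2 * (A + B)).
Proof.
  intros Heven HA HB. unfold pv_integral.
  apply filterlim_ext_loc with (fun p => 2 * (RInt g (fst p) 1 + RInt g 1 (snd p))).
  { eapply filter_imp; [| apply truncation_eventually]. intros [e R] [He HR]. simpl in *.
    rewrite (trunc_int_fold e R 1) by (try lra; intros; rewrite Heven by auto; ring).
    rewrite <- (RInt_Chasles g e 1 R) by (apply g_integrable; lra).
    unfold plus; simpl. ring. }
  apply (filterlim_comp_2 (G := locally A) (H := locally B)
           (fun p : R * R => RInt g (fst p) 1) (fun p : R * R => RInt g 1 (snd p))
           (fun a b => 2 * (a + b))).
  - exact (filterlim_comp _ _ _ fst (fun e => RInt g e 1) _ _ _ filterlim_fst HA).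
  - exact (filterlim_comp _ _ _ snd (fun R => RInt g 1 R) _ _ _ filterlim_snd HB).
  - apply (filterlim_comp _ _ _ (fun x : R * R => plus (fst x) (snd x)) (fun y => 2 * y) _
             (locally (plus A B))).
    + exact (@filterlim_plus R_AbsRing R_NormedModule A B).
    + apply continuity_pt_filterlim. reg.
Qed.

End PrincipalValue.

(** * The principal values for [P_n] *)

Lemma poly_derive_is_poly (Q Qd : R -> R) (c : nat -> R) N :
  (forall t, Q t = sum_f_R0 (fun k => c k * t ^ k) N) -> (forall t, is_derive Q t (Qd t)) ->
  exists c' N', forall t, Qd t = sum_f_R0 (fun k => c' k * t ^ k) N'.
Proof.
  intros HQ HQd.
  assert (E : forall t, Qd t = match N with
                              | 0%nat => 0
                              | S _ => sum_f_R0 (fun k => INR (S k) * c (S k) * t ^ k) (pred N)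
                              end).
  { intros t. rewrite <- (is_derive_unique _ _ _ (HQd t)). apply is_derive_unique.
    apply (is_derive_ext (fun t => sum_f_R0 (fun k => c k * t ^ k) N)); [intros; symmetry; apply HQ |].
    apply is_derive_Reals, derivable_pt_lim_finite_sum. }
  destruct N as [|N].
  - exists (fun _ => 0), 0%nat. intros t. rewrite E. simpl. ring.
  - exists (fun k => INR (S k) * c (S k)), N. intros t. rewrite E. reflexivity.
Qed.

Lemma poly_second_derive_continuous (Q Qd Qdd : R -> R) (c : nat -> R) N :
  (forall t, Q t = sum_f_R0 (fun k => c k * t ^ k) N) ->
  (forall t, is_derive Q t (Qd t)) -> (forall t, is_derive Qd t (Qdd t)) ->
  everywhere_continuous Qdd.
Proof.
  intros HQ HQd HQdd.
  destruct (poly_derive_is_poly Q Qd c N HQ HQd) as [c1 [N1 H1]].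
  destruct (poly_derive_is_poly Qd Qdd c1 N1 H1 HQdd) as [c2 [N2 H2]].
  intro t. apply continuity_pt_ext with (fun t => sum_f_R0 (fun k => c2 k * t ^ k) N2).
  - intros; symmetry; apply H2.
  - apply continuity_finite_sum.
Qed.

Lemma lim_ge_of_eventually_ge {T} (F : (T -> Prop) -> Prop) {FF : ProperFilter' F}
  (h : T -> R) c L : F (fun x => c <= h x) -> filterlim h F (locally L) -> c <= L.
Proof.
  intros Hc Hh. exact (filterlim_le (F := F) (fun _ => c) h c L Hc (filterlim_const c) Hh).
Qed.

Lemma sin_pow_sign_mul m x : sin ((-1) ^ m * x) = (-1) ^ m * sin x.
Proof.
  induction m; simpl.
  - rewrite !Rmult_1_l. reflexivity.
  - replace (-1 * (-1) ^ m * x) with (- ((-1) ^ m * x)) by ring.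
    rewrite sin_neg, IHm. ring.
Qed.

Lemma ln_le_x_minus_1 x : 0 < x -> ln x <= x - 1.
Proof. intros Hx. pose proof (exp_ineq1_le (ln x)). rewrite exp_ln in H by auto. lra. Qed.

Section PrincipalValuesOfConv.
Variables (f : R -> R) (cn a : R) (m : nat).
Hypothesis a_pos : 0 < a.
Hypothesis a_small : a <= 1/10.
Hypothesis m_a : INR m * a ^ 2 = 1.
Hypothesis cn_pos : 0 < cn.
Hypothesis phi_normalized : RInt (phi cn m) (-2) 2 = 1.
Hypothesis f_continuous : everywhere_continuous f.
Hypothesis f_odd : forall t, f (-t) = - f t.
Hypothesis f_unit_range : forall t, 0 <= t -> 0 <= f t <= 1.
Hypothesis f_one : forall t, a <= t <= 1 - a -> f t = 1.

Local Notation P := (conv f cn m).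

Lemma m_ge_2 : (2 <= m)%nat.
Proof.
  destruct (Nat.le_gt_cases 2 m) as [H | H]; auto.
  assert (Hm : INR m <= 1) by (apply (le_INR m 1); lia). nra.
Qed.

Lemma f_one_middle t : 1/2 <= t <= 3/4 -> f t = 1.
Proof. intros; apply f_one; lra. Qed.

Lemma P_derive t : is_derive P t (dconv f cn m t).
Proof. apply conv_derive; auto. Qed.

Lemma dP_derive t : is_derive (dconv f cn m) t (ddconv f cn m t).
Proof. apply dconv_derive; auto. Qed.

Lemma ddP_continuous : everywhere_continuous (ddconv f cn m).
Proof.
  apply (poly_second_derive_continuous P (dconv f cn m) _ (conv_coef f cn m) (2 * m)).
  - intros; apply conv_poly_expansion; auto.
  - apply P_derive.
  - apply dP_derive.
Qed.

Lemma P_continuous : everywhere_continuous P.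
Proof. apply (continuity_pt_of_derive _ _ P_derive). Qed.

Lemma dP_continuous : everywhere_continuous (dconv f cn m).
Proof. apply (continuity_pt_of_derive _ _ dP_derive). Qed.

Lemma P_odd t : P (-t) = - P t.
Proof. apply conv_odd; auto. Qed.

Lemma P_unit_range t : 0 <= t <= 1 -> 0 <= P t <= 1.
Proof. apply (conv_unit_range f cn a m); auto. Qed.

Lemma P_le_linear : exists K, 0 < K /\ forall x, 0 <= x <= 1 -> P x <= K * x.
Proof.
  destruct (continuity_ab_maj (fun t => Rabs (dconv f cn m t)) 0 1) as [M [HM _]]; [lra | |].
  { intros c _. apply (continuity_pt_comp (dconv f cn m) Rabs);
      [apply dP_continuous | apply Rcontinuity_abs]. }
  exists (Rabs (dconv f cn m M) + 1). split; [pose proof (Rabs_pos (dconv f cn m M)); lra |].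
  intros x Hx.
  assert (P0 : P 0 = 0) by (pose proof (P_odd 0) as H; rewrite Ropp_0 in H; lra).
  assert (E : RInt (dconv f cn m) 0 x = P x - P 0)
    by (apply RInt_derive_continuity_pt; [lra | intros; apply P_derive | intros; apply dP_continuous]).
  rewrite P0, Rminus_0_r in E. rewrite <- E. replace x with (x - 0) at 2 by ring.
  apply RInt_le_const; [lra | intros; apply dP_continuous |].
  intros y Hy. pose proof (HM y ltac:(lra)). pose proof (Rle_abs (dconv f cn m y)). simpl in *. lra.
Qed.

Local Notation g := (fun t => sin (P t) / t).

Lemma g_continuous x : x <> 0 -> continuity_pt g x.
Proof.
  intros Hx. apply (continuity_pt_div (fun t => sin (P t)) (fun t => t)); auto;
    [| apply continuity_pt_id].
  apply (continuity_pt_comp P sin); [apply P_continuous | apply continuity_sin].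
Qed.

Lemma g_integrable p q : 0 < p -> p <= q -> ex_RInt g p q /\ ex_RInt g (-q) (-p).
Proof.
  intros Hp Hpq. split; apply ex_RInt_continuity_pt; try lra; intros; apply g_continuous; lra.
Qed.

Lemma g_nonneg x : 0 < x <= 1 -> 0 <= g x.
Proof.
  intros Hx. destruct (P_unit_range x) as [h1 h2]; [lra|]. pose proof PI2_1.
  unfold Rdiv. apply Rmult_le_pos; [apply sin_ge_0; lra | left; apply Rinv_0_lt_compat; lra].
Qed.

Lemma g_bounded : exists K, 0 < K /\ forall x, 0 < x <= 1 -> Rabs (g x) <= K.
Proof.
  destruct P_le_linear as [K [HK HPK]]. exists K. split; auto. intros x Hx.
  rewrite Rabs_right by (apply Rle_ge, g_nonneg; auto).
  destruct (P_unit_range x) as [[h1 | h1] h2]; [lra | |].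
  - pose proof (sin_lt_x (P x) h1). pose proof (HPK x ltac:(lra)).
    apply (Rmult_le_reg_r x); [lra |]. unfold Rdiv. rewrite Rmult_assoc, Rinv_l, Rmult_1_r by lra. lra.
  - rewrite <- h1, sin_0. unfold Rdiv. rewrite Rmult_0_l. lra.
Qed.

Lemma g_near_cvg : exists A, filterlim (fun e => RInt g e 1) (at_right 0) (locally A).
Proof.
  destruct g_bounded as [K [HK HgK]]. apply (RInt_cvg_at_right_0_of_bounded g K); auto.
  intros; apply g_integrable; lra.
Qed.

Lemma sin_P_ge_half t : 5 * a <= t <= 1/2 -> 1/2 <= sin (P t).
Proof.
  intros Ht. assert (7/8 <= P t) by (apply (conv_ge_7_8 f cn a m); auto).
  destruct (P_unit_range t) as [h1 h2]; [lra|]. pose proof PI2_1; pose proof PI_4.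
  rewrite <- sin_PI6. apply sin_incr_1; lra.
Qed.

(* On [[5 a, 1/2]] the phase is at least [7/8 > pi / 6]: this is where [log d] comes from. *)
Lemma RInt_g_near_ge e : 0 < e < 5 * a -> 1/2 * (ln (1/2) - ln (5 * a)) <= RInt g e 1.
Proof.
  intros He. apply Rle_trans with (RInt g (5 * a) (1/2)).
  2:{ apply RInt_subinterval_le; try lra; intros; [apply g_continuous | apply g_nonneg]; lra. }
  assert (Hinv : forall x, 5 * a <= x <= 1/2 -> continuity_pt (fun t => / t) x).
  { intros; apply continuity_pt_inv; [apply continuity_pt_id | unfold id; lra]. }
  rewrite <- (RInt_derive_continuity_pt ln (fun t => / t)) by
    (first [lra | intros; apply is_derive_ln; lra | intros; apply Hinv; lra]).
  rewrite <- RInt_scal_R by (apply ex_RInt_continuity_pt; [lra | auto]).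
  apply RInt_le_continuity_pt; [lra | | intros; apply g_continuous; lra |].
  - intros. apply continuity_pt_mult; [apply continuity_pt_const; intros ? ?; reflexivity | auto].
  - intros x Hx. pose proof (sin_P_ge_half x Hx). unfold Rdiv.
    apply Rmult_le_compat_r; [left; apply Rinv_0_lt_compat |]; lra.
Qed.

Lemma g_near_lim_ge A : filterlim (fun e => RInt g e 1) (at_right 0) (locally A) ->
  1/2 * (ln (1/2) - ln (5 * a)) <= A.
Proof.
  intros HA. apply (lim_ge_of_eventually_ge (at_right 0) (fun e => RInt g e 1)); [| exact HA].
  exists (mkposreal (5 * a) ltac:(lra)). intros y Hy Hy0. apply RInt_g_near_ge.
  apply Rabs_lt_between in Hy. unfold minus, plus, opp in Hy; simpl in Hy. lra.
Qed.

Local Notation sign := ((-1) ^ S m).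

Lemma RInt_g_tail_abs_le p q : 3 <= p -> p <= q -> Rabs (RInt g p q) <= 2 / (p * (cn / 8)).
Proof.
  intros Hp Hpq.
  assert (E : RInt (fun t => sin (sign * P t) / t) p q = sign * RInt g p q).
  { rewrite <- RInt_scal_R by (apply g_integrable; lra). apply RInt_ext. intros x _.
    rewrite sin_pow_sign_mul. unfold Rdiv. req_R; ring. }
  assert (Hsign : sign = - (-1) ^ m) by (simpl; ring).
  pose proof m_ge_2.
  rewrite <- (Rmult_1_l (Rabs (RInt g p q))), <- (pow_1_abs (S m)), <- Rabs_mult, <- E.
  apply (RInt_sin_phase_div_abs_le (fun t => sign * P t) (fun t => sign * dconv f cn m t)
           (fun t => sign * ddconv f cn m t) (cn / 8) 3); try lra.
  - intros t. apply is_derive_scal, P_derive.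
  - intros t. apply is_derive_scal, dP_derive.
  - intro t. apply continuity_pt_mult;
      [apply continuity_pt_const; intros ? ?; reflexivity | apply ddP_continuous].
  - intros t Ht. rewrite Hsign. apply ddconv_signed_nonneg; auto.
  - rewrite Hsign. apply dconv_signed_at_3; auto using f_one_middle.
Qed.

Lemma g_tail_cvg : exists B, filterlim (fun R => RInt g 1 R) (Rbar_locally p_infty) (locally B).
Proof.
  apply (RInt_cvg_infty_of_tail_bound g 1 3 (16 / cn)); try lra.
  - intros; apply g_integrable; lra.
  - intros p q Hp Hpq. replace (16 / cn / p) with (2 / (p * (cn / 8))) by (field; lra).
    apply RInt_g_tail_abs_le; auto.
Qed.

Lemma RInt_g_far_ge R : 3 < R -> - ln 3 - 2 / (3 * (cn / 8)) <= RInt g 1 R.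
Proof.
  intros HR.
  rewrite (RInt_Chasles_continuity_pt g 1 3 R) by (try lra; intros; apply g_continuous; lra).
  assert (H1 : - ln 3 <= RInt g 1 3).
  { rewrite <- (Rminus_0_r (ln 3)), <- ln_1.
    rewrite <- (RInt_derive_continuity_pt ln (fun t => / t))
      by (first [lra | intros; apply is_derive_ln; lra
                | intros; apply continuity_pt_inv; [apply continuity_pt_id | unfold id; lra]]).
    rewrite <- RInt_opp_R by (apply ex_RInt_continuity_pt; [lra |]; intros;
      apply continuity_pt_inv; [apply continuity_pt_id | unfold id; lra]).
    apply RInt_le_continuity_pt; [lra | | intros; apply g_continuous; lra |].
    - intros. apply continuity_pt_opp, continuity_pt_inv; [apply continuity_pt_id | unfold id; lra].
    - intros x Hx. pose proof (SIN_bound (P x)). unfold Rdiv.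
      assert (0 < / x) by (apply Rinv_0_lt_compat; lra).
      assert (0 <= (sin (P x) + 1) * / x) by (apply Rmult_le_pos; lra). lra. }
  assert (H2 : Rabs (RInt g 3 R) <= 2 / (3 * (cn / 8))) by (apply RInt_g_tail_abs_le; lra).
  apply Rabs_le_between in H2. lra.
Qed.

Lemma g_tail_lim_ge B : filterlim (fun R => RInt g 1 R) (Rbar_locally p_infty) (locally B) ->
  - ln 3 - 2 / (3 * (cn / 8)) <= B.
Proof.
  intros HB. apply (lim_ge_of_eventually_ge (Rbar_locally p_infty) (fun R => RInt g 1 R)); [| exact HB].
  exists 3. intros; apply RInt_g_far_ge; auto.
Qed.

Lemma pv_cos_P_div : pv_integral (fun t => cos (P t) / t) 0.
Proof.
  apply pv_integral_odd.
  - intros p q Hp Hpq. split; apply ex_RInt_continuity_pt; try lra; intros x Hx;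
      (apply (continuity_pt_div (fun t => cos (P t)) (fun t => t)); [| apply continuity_pt_id | lra];
       apply (continuity_pt_comp P cos); [apply P_continuous | apply continuity_cos]).
  - intros x Hx. rewrite P_odd, cos_neg. unfold Rdiv. rewrite Rinv_opp. ring.
Qed.

Lemma pv_sin_P_div_ge : exists L, pv_integral g L /\ - ln a - 52 <= L.
Proof.
  destruct g_near_cvg as [A HA]. destruct g_tail_cvg as [B HB].
  exists (2 * (A + B)). split.
  - apply pv_integral_even; auto; [apply g_integrable |].
    intros x Hx. rewrite P_odd, sin_neg. unfold Rdiv. rewrite Rinv_opp. ring.
  - pose proof (g_near_lim_ge A HA). pose proof (g_tail_lim_ge B HB).
    pose proof (cn_ge cn m cn_pos phi_normalized).
    assert (E5 : ln (5 * a) = ln 5 + ln a) by (apply ln_mult; lra).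
    assert (E2 : ln (1/2) = - ln 2) by (rewrite ln_div, ln_1 by lra; ring).
    assert (ln 2 <= 1 /\ ln 3 <= 2 /\ ln 5 <= 4) as [? [? ?]].
    { pose proof (ln_le_x_minus_1 2); pose proof (ln_le_x_minus_1 3).
      pose proof (ln_le_x_minus_1 5). lra. }
    assert (2 / (3 * (cn / 8)) <= 64/3).
    { replace (2 / (3 * (cn / 8))) with (16 / (3 * cn)) by (field; lra).
      apply (Rmult_le_reg_r (3 * cn)); [lra |]. unfold Rdiv. rewrite Rmult_assoc, Rinv_l by lra. nra. }
    lra.
Qed.

End PrincipalValuesOfConv.

Lemma INR_ge_pow_3_100 (n : nat) : (3 ^ 100 <= n)%nat -> 3 ^ 100 <= INR n.
Proof.
  intros Hn. apply le_INR in Hn. rewrite pow_INR in Hn.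
  replace (INR 3) with 3 in Hn by (simpl; ring). exact Hn.
Qed.

Lemma ln_INR_ge_100 (n : nat) : (3 ^ 100 <= n)%nat -> 100 <= ln (INR n).
Proof.
  intros Hn. apply INR_ge_pow_3_100 in Hn.
  assert (H3 : 0 < 3 ^ 100) by (apply pow_lt; lra).
  assert (ln (3 ^ 100) <= ln (INR n)) by (apply ln_le; auto).
  rewrite ln_pow in H by lra. replace (INR 100) with 100 in H by (simpl; ring).
  assert (1 <= ln 3) by (rewrite <- (ln_exp 1) at 1; apply ln_le; [apply exp_pos | apply exp_le_3]).
  nra.
Qed.

Lemma INR_ge_10 (n : nat) : (3 ^ 100 <= n)%nat -> 10 <= INR n.
Proof.
  intros Hn. apply INR_ge_pow_3_100 in Hn.
  assert (3 ^ 3 <= 3 ^ 100) by (apply Rle_pow; [lra | lia]). simpl in H. lra.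
Qed.

Lemma ln_degree_le (n : nat) : (1 <= n)%nat -> ln (INR (2 * n ^ 2 - 1)) <= 1 + 2 * ln (INR n).
Proof.
  intros Hn. assert (1 <= INR n) by (apply (le_INR 1); lia).
  rewrite minus_INR by (simpl; nia). rewrite mult_INR, pow_INR. simpl (INR 2); simpl (INR 1).
  apply Rle_trans with (ln (2 * INR n ^ 2)); [apply ln_le; nra |].
  rewrite ln_mult, ln_pow by (try apply pow_lt; lra). simpl (INR 2).
  pose proof (ln_le_x_minus_1 2). lra.
Qed.

Theorem proposition2 :
  exists c : R, 0 < c /\
  exists N : nat, forall n : nat, (N <= n)%nat ->
  forall (f : R -> R) (cn : R),
    (forall t, continuity_pt f t) ->
    (forall t, 1 / INR n <= t <= 1 - 1 / INR n -> f t = 1) ->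
    (forall t, -1 + 1 / INR n <= t <= - (1 / INR n) -> f t = -1) ->
    (forall t, 1 <= Rabs t -> f t = 0) ->
    affine_on f (-1) (-1 + 1 / INR n) ->
    affine_on f (- (1 / INR n)) (1 / INR n) ->
    affine_on f (1 - 1 / INR n) 1 ->
    0 < cn ->
    RInt (fun x => cn * (1 - x ^ 2 / 4) ^ (n ^ 2)) (-2) 2 = 1 ->
    let phi := fun x => cn * (1 - x ^ 2 / 4) ^ (n ^ 2) in
    let P := fun t => RInt (fun x => f x * phi (t - x)) (-1) 1 in
    let d := (2 * n ^ 2 - 1)%nat in
    is_poly_of_degree P d /\
    exists Lre Lim : R,
      pv_integral (fun t => cos (P t) / t) Lre /\
      pv_integral (fun t => sin (P t) / t) Lim /\
      c * ln (INR d) <= Cmod (Lre, Lim).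
Proof.
  exists (1/8). split; [lra |]. exists (3 ^ 100)%nat.
  intros n Hn f cn Hf H1 Hm1 H0 A1 A2 A3 Hcn Hnorm phi' P d.
  pose proof (ln_INR_ge_100 n Hn) as Hln. pose proof (INR_ge_10 n Hn) as Hn10.
  assert (Hn1 : (1 <= n)%nat) by (apply INR_le; simpl; lra).
  set (a := 1 / INR n) in *.
  assert (Ha : 0 < a <= 1/10).
  { unfold a. split;
      [apply Rdiv_lt_0_compat | apply Rmult_le_reg_r with (INR n); field_simplify]; lra. }
  assert (Hma : INR (n ^ 2) * a ^ 2 = 1) by (unfold a; rewrite pow_INR; field; lra).
  pose proof (trapezoid_odd f a ltac:(lra) ltac:(lra) H1 Hm1 H0 A1 A2 A3) as Hodd.
  pose proof (trapezoid_unit_range f a ltac:(lra) ltac:(lra) H1 Hm1 H0 A1 A2 A3) as Hrange.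
  split.
  - apply (conv_is_poly_of_degree f cn (n ^ 2)); auto; [simpl; nia | apply moment_0_odd; auto |].
    pose proof (moment_1_le f Hf Hodd Hrange ltac:(intros; apply H1; lra)). lra.
  - destruct (pv_sin_P_div_ge f cn a (n ^ 2)) as [L [HL HLge]]; try tauto.
    exists 0, L. split; [apply (pv_cos_P_div f cn (n ^ 2)); tauto | split; [exact HL |]].
    assert (Hla : - ln a = ln (INR n)) by (unfold a; rewrite ln_div, ln_1 by lra; ring).
    pose proof (ln_degree_le n Hn1).
    unfold Cmod, d; cbn [fst snd]. replace (0 ^ 2 + L ^ 2) with (L ^ 2) by ring.
    rewrite sqrt_pow2 by lra. lra.
Qed.
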